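(* Let $F$ be an infinite field, $G$ a group with identity $e$, and let $B=UT(d_1,\dots,d_n)$ be endowed with an elementary $G$-grading. If the polynomials $x_{e}^{(1)}x_{e}^{(2)}-x_{e}^{(2)}x_{e}^{(1)}$ and $x_{g}^{(1)}x_{g^{-1}}^{(2)}x_{g}^{(3)}-x_{g}^{(3)}x_{g^{-1}}^{(2)}x_{g}^{(1)}$ ($g\neq e$, $B_g\neq0$) form a basis of the graded polynomial identities of $B$, then $n=1$, i.e., $UT(d_1,\dots,d_n)=M_{d_1}(F)$.
   Context: $UT(d_1,\dots,d_n)$ is the subalgebra of $M_{d_1+\cdots+d_n}(F)$ of upper block triangular matrices with diagonal blocks of sizes $d_1,\dots,d_n$ (blocks $A_{ij}$ of size $d_i\times d_j$, zero for $i>j$). An elementary grading is one induced by a tuple $(a_1,\dots,a_m)\in G^m$, $m=d_1+\cdots+d_n$: the matrix unit $e_{ij}$ has degree $a_i^{-1}a_j$. A basis of the graded identities is a set generating the $T_G$-ideal of all graded polynomial identities (in free variables $x_g^{(i)}$ of degree $g$). *)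

From HB Require Import structures.
From mathcomp Require Import all_boot all_order all_algebra.
From mathcomp Require Import monoid.
Set Implicit Arguments. Unset Strict Implicit. Unset Printing Implicit Defensive.
Import Order.TTheory GRing.Theory Num.Theory.

Local Open Scope ring_scope.

Definition infinite_type (T : eqType) : Prop := forall s : seq T, exists x, x \notin s.

(* A variable x_g^(i) is the pair (i, g) : nat * G.  A monomial (word) is a
   sequence of variables; a polynomial is represented by a finite formal linear
   combination (list of (coefficient, word) pairs); two representations denote
   the same element of F<X_G> iff all their coefficients agree (peq). *)
Section FreeAlg.
Variables (F : fieldType) (G : groupType).

Definition gvar := (nat * G)%type.
Definition gword := seq gvar.
Definition gpoly := seq (F * gword).

Definition pvar (i : nat) (g : G) : gpoly := [:: (1, [:: (i, g)])].
Definition padd (p q : gpoly) : gpoly := p ++ q.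
Definition pscale (c : F) (p : gpoly) : gpoly := [seq (c * t.1, t.2) | t <- p].
Definition popp (p : gpoly) : gpoly := pscale (-1) p.
Definition psub (p q : gpoly) : gpoly := padd p (popp q).
Definition pmul (p q : gpoly) : gpoly := [seq (t.1 * s.1, t.2 ++ s.2) | t <- p, s <- q].

Definition pcoef (p : gpoly) (w : gword) : F := \sum_(t <- p | t.2 == w) t.1.
Definition peq (p q : gpoly) : Prop := forall w, pcoef p w = pcoef q w.

Definition wdeg (w : gword) : G := foldr (fun v g => (v.2 * g)%g) 1%g w.
Definition homogeneous (g : G) (p : gpoly) : Prop :=
  forall w, pcoef p w != 0 -> wdeg w = g.

Definition wsubst (phi : gvar -> gpoly) (w : gword) : gpoly :=
  foldr (fun v acc => pmul (phi v) acc) [:: (1, [::])] w.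
Definition psubst (phi : gvar -> gpoly) (p : gpoly) : gpoly :=
  flatten [seq pscale t.1 (wsubst phi t.2) | t <- p].
Definition graded_subst (phi : gvar -> gpoly) : Prop :=
  forall v : gvar, homogeneous v.2 (phi v).

Definition TG_ideal (I : gpoly -> Prop) : Prop :=
  [/\ (forall p q, peq p q -> I p -> I q),
      I [::],
      (forall p q, I p -> I q -> I (padd p q)),
      (forall c p, I p -> I (pscale c p)) &
      ((forall p q, I p -> I (pmul q p) /\ I (pmul p q)) /\
       (forall phi p, graded_subst phi -> I p -> I (psubst phi p)))].

Definition in_TG_ideal (S : gpoly -> Prop) (f : gpoly) : Prop :=
  forall I, TG_ideal I -> (forall s, S s -> I s) -> I f.

Definition peval (m : nat) (rho : gvar -> 'M[F]_m) (p : gpoly) : 'M[F]_m :=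
  \sum_(t <- p) t.1 *: \prod_(v <- t.2) rho v.

End FreeAlg.

Section UT.
Variables (n : nat) (d : 'I_n -> nat).

Definition utsize : nat := \sum_(k < n) d k.

(* index (0-based) of the diagonal block containing row/column r:
   the number of k with d_0 + ... + d_k <= r *)
Definition blk (r : nat) : nat :=
  \sum_(k < n) ((\sum_(j < n | (j <= k)%N) d j <= r)%N : nat).

Definition in_UT (F : fieldType) (A : 'M[F]_utsize) : Prop :=
  forall r c : 'I_utsize, (blk c < blk r)%N -> A r c = 0.

Variables (F : fieldType) (G : groupType) (a : 'I_utsize -> G).

(* degree of the matrix unit e_{rc} in the elementary grading given by a *)
Definition edeg (r c : 'I_utsize) : G := ((a r)^-1 * a c)%g.

Definition in_Bg (g : G) (A : 'M[F]_utsize) : Prop :=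
  in_UT A /\ forall r c, edeg r c != g -> A r c = 0.

Definition Bg_nonzero (g : G) : Prop :=
  exists r c : 'I_utsize, (blk r <= blk c)%N /\ edeg r c = g.

Definition graded_identity (f : gpoly F G) : Prop :=
  forall rho : gvar G -> 'M[F]_utsize,
    (forall v : gvar G, in_Bg v.2 (rho v)) -> peval rho f = 0.

Definition basis_set (f : gpoly F G) : Prop :=
  f = psub (pmul (pvar F 1 1%g) (pvar F 2 1%g)) (pmul (pvar F 2 1%g) (pvar F 1 1%g))
  \/ exists g : G, [/\ g != 1%g, Bg_nonzero g &
       f = psub (pmul (pmul (pvar F 1 g) (pvar F 2 g^-1%g)) (pvar F 3 g))
                (pmul (pmul (pvar F 3 g) (pvar F 2 g^-1%g)) (pvar F 1 g))].

End UT.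

(* Every proposed generator vanishes under all commutative evaluations of the
   variables in F, and so does every element of the T_G-ideal they generate.
   Hence it suffices to exhibit a single monomial that is a graded identity of B:
   a monomial never vanishes under the evaluation sending every variable to 1.
   The identity [x_e^(1), x_e^(2)] forces the grading tuple a to be injective.
   Take the monomial walking through all indices and back to the start, with the
   letter from i to j of degree a_i^-1 a_j.  A nonzero entry (r, c) of its value
   is a path of matrix units with nondecreasing blocks whose degrees multiply to
   e, so c = r and the path stays inside the block of r; by injectivity of a it
   passes through m distinct indices, i.e. through all of them.  So n >= 2 makes
   the monomial an identity, while n = 0 makes every polynomial one.  The field
   need not be infinite for this argument. *)
From HB Require Import structures.
From mathcomp Require Import all_boot all_order all_algebra.
From mathcomp Require Import monoid.
From mathcomp Require Import ring.
Set Implicit Arguments. Unset Strict Implicit. Unset Printing Implicit Defensive.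
Import Order.TTheory GRing.Theory Num.Theory.
Local Open Scope ring_scope.

Section CommutativeEvaluation.
Variables (F : fieldType) (G : groupType).
Implicit Types (p q : gpoly F G) (lam : gvar G -> F) (w : gword G).

Definition cmon lam w : F := \prod_(v <- w) lam v.
Definition ceval lam p : F := \sum_(t <- p) t.1 * cmon lam t.2.

Lemma cmon_cat lam w1 w2 : cmon lam (w1 ++ w2) = cmon lam w1 * cmon lam w2.
Proof. by rewrite /cmon big_cat. Qed.

Lemma ceval_pcoef lam p (W : seq (gword G)) : uniq W -> {subset map snd p <= W} ->
  ceval lam p = \sum_(w <- W) pcoef p w * cmon lam w.
Proof.
move=> uniqW pW; rewrite /ceval /pcoef.
under [RHS]eq_bigr => w _ do rewrite mulr_suml big_mkcond.
rewrite exchange_big /=; apply: eq_big_seq => t tp.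
rewrite -big_mkcond /= (eq_bigr (fun _ => t.1 * cmon lam t.2)); last by move=> w /eqP ->.
have countW : count (fun w => t.2 == w) W = 1%N.
  rewrite (eq_count (a2 := pred1 t.2)); last by move=> w /=; rewrite eq_sym.
  by rewrite count_uniq_mem // pW // map_f.
by rewrite big_const_seq countW iter_addr addr0 -[RHS]mulr1n.
Qed.

Lemma ceval_peq lam p q : peq p q -> ceval lam p = ceval lam q.
Proof.
move=> epq; set W := undup (map snd p ++ map snd q).
have uniqW : uniq W by exact: undup_uniq.
rewrite (@ceval_pcoef lam p W) // => [|w wp]; last by rewrite mem_undup mem_cat wp.
rewrite (@ceval_pcoef lam q W) // => [|w wq]; last by rewrite mem_undup mem_cat wq orbT.
by apply: eq_bigr => w _; rewrite epq.
Qed.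

Lemma ceval_padd lam p q : ceval lam (padd p q) = ceval lam p + ceval lam q.
Proof. by rewrite /ceval /padd big_cat. Qed.

Lemma ceval_pscale lam c p : ceval lam (pscale c p) = c * ceval lam p.
Proof.
by rewrite /ceval /pscale big_map mulr_sumr; apply: eq_bigr => t _; rewrite mulrA.
Qed.

Lemma ceval_pmul lam p q : ceval lam (pmul p q) = ceval lam p * ceval lam q.
Proof.
rewrite /ceval /pmul big_allpairs_dep /= mulr_suml; apply: eq_bigr => t _.
by rewrite mulr_sumr; apply: eq_bigr => s _ /=; rewrite cmon_cat; ring.
Qed.

Lemma ceval_pvar lam i g : ceval lam (pvar F i g) = lam (i, g).
Proof. by rewrite /ceval /cmon !big_cons !big_nil /= mulr1 mul1r addr0. Qed.

Lemma ceval_wsubst lam phi w :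
  ceval lam (wsubst phi w) = cmon (fun v => ceval lam (phi v)) w.
Proof.
elim: w => [|v w IHw] /=; first by rewrite /ceval /cmon !big_cons !big_nil mulr1 addr0.
by rewrite ceval_pmul IHw /cmon big_cons.
Qed.

Lemma ceval_psubst lam phi p :
  ceval lam (psubst phi p) = ceval (fun v => ceval lam (phi v)) p.
Proof.
rewrite /psubst /ceval big_flatten /= big_map; apply: eq_bigr => t _.
by rewrite -/(ceval lam _) ceval_pscale ceval_wsubst.
Qed.

Definition comm_identity p : Prop := forall lam, ceval lam p = 0.

Lemma comm_identity_TG_ideal : TG_ideal comm_identity.
Proof.
split.
- by move=> p q epq Ip lam; rewrite -(ceval_peq lam epq).
- by move=> lam; rewrite /ceval big_nil.
- by move=> p q Ip Iq lam; rewrite ceval_padd Ip Iq addr0.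
- by move=> c p Ip lam; rewrite ceval_pscale Ip mulr0.
split.
- by move=> p q Ip; split=> lam; rewrite ceval_pmul Ip ?mulr0 ?mul0r.
- by move=> phi p _ Ip lam; rewrite ceval_psubst Ip.
Qed.

Lemma monomial_not_comm_identity w : ~ comm_identity [:: (1, w)].
Proof.
move=> /(_ (fun _ => 1)); rewrite /ceval /cmon big_seq1 mul1r big1 //.
by move/eqP; rewrite oner_eq0.
Qed.

End CommutativeEvaluation.

Lemma basis_set_comm_identity (F : fieldType) (G : groupType) n (d : 'I_n -> nat)
  (a : 'I_(utsize d) -> G) (f : gpoly F G) : basis_set a f -> comm_identity f.
Proof.
by move=> [->|[g [_ _ ->]]] lam;
  rewrite /psub /popp ceval_padd ceval_pscale !ceval_pmul !ceval_pvar; ring.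
Qed.

Section WalkWord.
Variables (G : groupType) (T : eqType) (a : T -> G).

Fixpoint walk_word (x : T) (ys : seq T) : gword G :=
  if ys is y :: ys' then (0%N, ((a x)^-1 * a y)%g) :: walk_word y ys' else [::].

Lemma wdeg_walk_word x ys : wdeg (walk_word x ys) = ((a x)^-1 * a (last x ys))%g.
Proof.
elim: ys x => [|y ys IHys] x /=; first by rewrite mulVg.
by rewrite IHys mulgA mulgK.
Qed.

Lemma walk_word_prefix x ys y : y \in x :: ys ->
  exists k, wdeg (take k (walk_word x ys)) = ((a x)^-1 * a y)%g.
Proof.
elim: ys x => [|z ys IHys] x; first by rewrite inE => /eqP ->; exists 0%N; rewrite mulVg.
rewrite inE => /orP [/eqP ->|/IHys [k wdeg_k]]; first by exists 0%N; rewrite mulVg.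
by exists k.+1; rewrite /= wdeg_k mulgA mulgK.
Qed.

End WalkWord.

Section GradedUT.
Variables (n : nat) (d : 'I_n -> nat) (F : fieldType) (G : groupType)
  (a : 'I_(utsize d) -> G).
Local Notation m := (utsize d).
Local Notation blk := (blk d).

Lemma graded_identity_utsize0 (f : gpoly F G) : m = 0%N -> graded_identity a f.
Proof. by move=> m0 rho _; apply/matrixP => -[i lt_im]; exfalso; move: lt_im; rewrite m0. Qed.

Lemma delta_mx_in_Bg (r c : 'I_m) : (blk r <= blk c)%N ->
  in_Bg a (edeg a r c) (delta_mx r c : 'M[F]_m).
Proof.
move=> le_rc; split=> i j; rewrite mxE;
  case: (eqVneq i r) => [->|] //; case: (eqVneq j c) => [->|] //=.
- by rewrite ltnNge le_rc.
- by rewrite eqxx.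
Qed.

Lemma zero_in_Bg g : in_Bg a g (0 : 'M[F]_m).
Proof. by split=> i j _; rewrite mxE. Qed.

Lemma prod_Bg_entry_path (rho : gvar G -> 'M[F]_m) :
  (forall v : gvar G, in_Bg a v.2 (rho v)) ->
  forall (vs : seq (gvar G)) (r c : 'I_m), (\prod_(v <- vs) rho v) r c != 0 ->
  [/\ a c = (a r * wdeg vs)%g, (blk r <= blk c)%N &
   forall k, exists t : 'I_m, [/\ (blk r <= blk t)%N, (blk t <= blk c)%N &
                                a t = (a r * wdeg (take k vs))%g]].
Proof.
move=> rhoBg; elim=> [|v vs IHvs] r c.
  rewrite big_nil mxE /= => nz_rc.
  have -> : c = r by apply/eqP; apply: contraNT nz_rc; rewrite eq_sym => /negbTE ->.
  by split=> [|//|k]; [rewrite mulg1 | exists r; rewrite mulg1].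
rewrite big_cons -mulmxE mxE => nz_rc.
have [t|all0] := pickP (fun t => rho v r t * (\prod_(v0 <- vs) rho v0) t c != 0); last first.
  by move: nz_rc; rewrite big1 ?eqxx // => t _; apply/eqP/negbFE/all0.
rewrite mulf_eq0 negb_or => /andP [nz_rt nz_tc].
have [a_c le_tc prefix_tc] := IHvs t c nz_tc.
have [rhoUT rhoG] := rhoBg v.
have le_rt : (blk r <= blk t)%N by rewrite leqNgt; apply: contra nz_rt => /rhoUT ->.
have a_t : a t = (a r * v.2)%g.
  have <- : edeg a r t = v.2 by apply/eqP; apply: contraNT nz_rt => /rhoG ->.
  by rewrite /edeg mulVKg.
split; first by rewrite a_c a_t /= mulgA.
  exact: leq_trans le_rt le_tc.
case=> [|k]; first by exists r; rewrite /= mulg1 leqnn (leq_trans le_rt le_tc).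
have [t' [le_tt' le_t'c a_t']] := prefix_tc k.
by exists t'; rewrite (leq_trans le_rt le_tt') le_t'c a_t' a_t /= mulgA.
Qed.

Definition ecommutator : gpoly F G :=
  psub (pmul (pvar F 1 1%g) (pvar F 2 1%g)) (pmul (pvar F 2 1%g) (pvar F 1 1%g)).

(* If r <> c have the same degree, then e_rc, e_cc lie in B_e and do not commute. *)
Lemma ecommutator_identity_grading_inj : graded_identity a ecommutator -> injective a.
Proof.
move=> idB; suff inj_le (r c : 'I_m) : (blk r <= blk c)%N -> a r = a c -> r = c.
  move=> r c a_rc; case: (leqP (blk r) (blk c)) => [le_rc|/ltnW le_cr].
    exact: inj_le.
  by apply/esym/inj_le.
move=> le_rc a_rc; apply/eqP/negPn/negP => neq_rc.
pose rho (v : gvar G) : 'M[F]_m :=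
  if v == (1%N, 1%g) then delta_mx r c else if v == (2%N, 1%g) then delta_mx c c else 0.
have rhoBg v : in_Bg a v.2 (rho v).
  rewrite /rho; case: (eqVneq v (1%N, 1%g)) => [->|_].
    by have := delta_mx_in_Bg le_rc; rewrite /edeg a_rc mulVg.
  case: (eqVneq v (2%N, 1%g)) => [->|_]; last exact: zero_in_Bg.
  by have := delta_mx_in_Bg (leqnn (blk c)); rewrite /edeg mulVg.
have := idB rho rhoBg.
rewrite /peval /ecommutator /psub /padd /popp /pscale /pmul /pvar /=.
rewrite !big_cons !big_nil /rho !eqxx /= !mulr1 !scale1r addr0 scaleN1r -!mulmxE.
rewrite mul_delta_mx mul_delta_mx_0 1?eq_sym // oppr0 addr0.
by move=> /matrixP /(_ r c); rewrite !mxE !eqxx => /eqP; rewrite oner_eq0.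
Qed.

Variable i0 : 'I_m.

Definition cycle_word : gword G := walk_word a i0 (rcons (enum 'I_m) i0).

Lemma cycle_word_entry_blk (rho : gvar G -> 'M[F]_m) (r c : 'I_m) :
  injective a -> (forall v : gvar G, in_Bg a v.2 (rho v)) ->
  (\prod_(v <- cycle_word) rho v) r c != 0 -> forall u : 'I_m, blk u = blk r.
Proof.
move=> inj_a rhoBg nz_rc.
have [a_c _ prefix_rc] := prod_Bg_entry_path rhoBg nz_rc.
move: a_c; rewrite wdeg_walk_word last_rcons mulVg mulg1 => /inj_a c_r.
rewrite {}c_r in prefix_rc.
have visit u : exists t : 'I_m,
    [/\ (blk r <= blk t)%N, (blk t <= blk r)%N & a t = (a r * ((a i0)^-1 * a u))%g].
  have u_in : u \in i0 :: rcons (enum 'I_m) i0 by rewrite !inE mem_rcons !inE mem_enum !orbT.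
  have [k <-] := walk_word_prefix a u_in; exact: prefix_rc.
have [f visit_f] := fin_all_exists visit.
have inj_f : injective f.
  move=> u u' fuu'; apply: inj_a.
  have [_ _ a_fu] := visit_f u; have [_ _ a_fu'] := visit_f u'.
  by move: a_fu; rewrite fuu' a_fu' => /mulgI /mulgI.
move=> u; have [g _ fgK] := injF_bij inj_f.
have [le_r le_u _] := visit_f (g u); rewrite fgK in le_r le_u.
by apply/eqP; rewrite eqn_leq le_u le_r.
Qed.

Lemma cycle_word_graded_identity (r c : 'I_m) :
  injective a -> (blk r < blk c)%N -> graded_identity a [:: ((1 : F), cycle_word)].
Proof.
move=> inj_a lt_rc rho rhoBg; rewrite /peval big_seq1 scale1r.
apply/matrixP => i j; rewrite mxE; apply/eqP; apply: contraT => nz_ij.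
have blk_i := cycle_word_entry_blk inj_a rhoBg nz_ij.
by move: lt_rc; rewrite !blk_i ltnn.
Qed.

End GradedUT.

Lemma blk_two_blocks n (d : 'I_n -> nat) : (forall k, (0 < d k)%N) -> (1 < n)%N ->
  exists r c : 'I_(utsize d), (blk d r < blk d c)%N.
Proof.
case: n d => [|[|n]] // d d_gt0 _.
have prefix_ge k : (d k <= \sum_(j < n.+2 | (j <= k)%N) d j)%N.
  by rewrite (bigD1 k) //= leq_addr.
have d0_lt : (d ord0 < utsize d)%N.
  rewrite /utsize !big_ord_recl /= -{1}[d ord0]addn0 ltn_add2l.
  exact: leq_trans (d_gt0 _) (leq_addr _ _).
exists (Ordinal (leq_ltn_trans (leq0n _) d0_lt)), (Ordinal d0_lt) => /=.
have -> : blk d 0 = 0%N.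
  rewrite /blk big1 // => k _.
  by rewrite leqNgt (leq_trans (d_gt0 k) (prefix_ge k)).
rewrite /blk (bigD1 ord0) //= (big_pred1 ord0) ?leqnn //.
by case=> -[|j] ?.
Qed.

Theorem mainTheorem6 (F : fieldType) (G : groupType) (n : nat) (d : 'I_n -> nat)
  (a : 'I_(utsize d) -> G) :
  infinite_type F ->
  (forall k, (0 < d k)%N) ->
  (forall f : gpoly F G, graded_identity a f <-> in_TG_ideal (basis_set a) f) ->
  n = 1%N.
Proof.
move=> _ d_gt0 basisP.
have identity_comm (f : gpoly F G) : graded_identity a f -> comm_identity f.
  move=> /basisP ideal_f; apply: ideal_f.
  - exact: comm_identity_TG_ideal.
  - exact: basis_set_comm_identity.
have inj_a : injective a.
  by apply: ecommutator_identity_grading_inj; apply/basisP => I _; apply; left.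
case: (ltngtP n 1) => [n_lt1 | n_gt1 | //].
- have m0 : utsize d = 0%N.
    by rewrite /utsize big1 // => -[k lt_kn]; have := leq_trans lt_kn n_lt1.
  exfalso; apply: (@monomial_not_comm_identity F G [::]).
  exact/identity_comm/graded_identity_utsize0.
- have [r [c lt_rc]] := blk_two_blocks d_gt0 n_gt1.
  exfalso; apply: (@monomial_not_comm_identity F G (cycle_word a r)).
  exact: identity_comm (cycle_word_graded_identity r inj_a lt_rc).
Qed.
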